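(* As formal power series in $z,y$, $$\sum_{p\ge0}\sum_{n\ge p}\mathbb{B}_n^{(-p)}\frac{z^n}{n!}\frac{y^p}{p!}=\exp\big((y+1)(e^z-1)\big).$$
   Context: For an integer $p\ge0$, the poly-Bell numbers $\mathbb{B}_n^{(-p)}$ ($n\ge0$) are defined by the exponential generating function $\sum_{n\ge0}\mathbb{B}_n^{(-p)}\frac{z^n}{n!}=\sum_{n\ge p}\frac{(e^z-1)^n}{(n-p)!}$. *)

(* Formal power series over the rationals, as coefficient
   functions; infinite sums of series are taken in the usual (coefficientwise,
   discrete) topology of formal power series. *)
From mathcomp Require Import all_boot all_order all_algebra.
Set Implicit Arguments. Unset Strict Implicit. Unset Printing Implicit Defensive.
Import GRing.Theory.
Local Open Scope ring_scope.

Definition fps := nat -> rat.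
Definition fps_mul (f g : fps) : fps :=
  fun n => \sum_(i < n.+1) f i * g (n - i)%N.
Definition fps_one : fps := fun n => if n == 0%N then 1 else 0.
Definition fps_pow (f : fps) (k : nat) : fps := iter k (fps_mul f) fps_one.
Definition fps_scale (c : rat) (f : fps) : fps := fun n => c * f n.
Definition fps_sum_to (F : nat -> fps) (S : fps) : Prop :=
  forall n, exists N, forall M, (N <= M)%N -> \sum_(k < M) F k n = S n.

Definition expm1 : fps := fun n => if n == 0%N then 0 else (n`!%:R)^-1.

(* EGF of the poly-Bell numbers: sum_{m >= p} (e^z-1)^m/(m-p)!,
   reindexed with m = k + p. *)
Definition polyBell_egf_sum (p : nat) (S : fps) : Prop :=
  fps_sum_to (fun k => fps_scale (k`!%:R)^-1 (fps_pow expm1 (k + p))) S.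

(* B p n stands for the poly-Bell number B_n^{(-p)}:
   sum_n B_n^{(-p)} z^n/n! = sum_{m>=p} (e^z-1)^m/(m-p)! *)
Definition is_polyBell (B : nat -> nat -> rat) : Prop :=
  forall p, polyBell_egf_sum p (fun n => B p n / n`!%:R).

(* f n p = coefficient of z^n y^p *)
Definition fps2 := nat -> nat -> rat.
Definition fps2_mul (f g : fps2) : fps2 :=
  fun n p => \sum_(i < n.+1) \sum_(j < p.+1) f i j * g (n - i)%N (p - j)%N.
Definition fps2_one : fps2 := fun n p => if (n == 0%N) && (p == 0%N) then 1 else 0.
Definition fps2_pow (f : fps2) (k : nat) : fps2 := iter k (fps2_mul f) fps2_one.
Definition fps2_scale (c : rat) (f : fps2) : fps2 := fun n p => c * f n p.
Definition fps2_sum_to (F : nat -> fps2) (S : fps2) : Prop :=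
  forall n p, exists N, forall M, (N <= M)%N -> \sum_(k < M) F k n p = S n p.

Definition y_plus_1 : fps2 := fun n p => if (n == 0%N) && (p <= 1)%N then 1 else 0.
Definition expm1_z : fps2 := fun n p => if p == 0%N then expm1 n else 0.

Definition fps2_exp_is (w S : fps2) : Prop :=
  fps2_sum_to (fun m => fps2_scale (m`!%:R)^-1 (fps2_pow w m)) S.

(* The series (y + 1)^m f(z)^m has coefficient 'C(m, p) [z^n] f^m at
   z^n y^p, and for f = e^z - 1 this vanishes once m > n.  Hence the
   coefficient of z^n y^p in exp((y + 1)(e^z - 1)) is the finite sum
   sum_m 'C(m, p)/m! [z^n](e^z - 1)^m, and writing m = k + p, with
   'C(k + p, p)/(k + p)! = 1/(k! p!), it becomes 1/p! times the z^n-coefficient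
   of sum_k (e^z - 1)^(k + p)/k!, that is B_n^(-p)/(n! p!). *)
From mathcomp Require Import all_boot all_order all_algebra zify.
Import GRing.Theory Num.Theory.
Local Open Scope ring_scope.

Lemma big_ord_vanishing_tail {V : nmodType} (F : nat -> V) {a M : nat} :
  (a <= M)%N -> (forall m, (a <= m)%N -> F m = 0) ->
  \sum_(m < M) F m = \sum_(m < a) F m.
Proof.
move=> aM F_tail; rewrite -(subnKC aM) big_split_ord /=.
rewrite [X in _ + X]big1 ?addr0 // => i _.
exact/F_tail/leq_addr.
Qed.

Lemma inv_fact_bin (R : numFieldType) k p :
  ((k + p)`!%:R)^-1 * 'C(k + p, p)%:R = (p`!%:R)^-1 * (k`!%:R)^-1 :> R.
Proof.
have C_neq0 : 'C(k + p, p)%:R != 0 :> R by rewrite pnatr_eq0 -lt0n bin_gt0 leq_addl.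
rewrite -[in LHS](bin_fact (leq_addl k p)) addnK !natrM invfM mulrAC.
by rewrite mulVf // mul1r invfM.
Qed.

Lemma sum_inv_fact_bin_shift {R : numFieldType} (g : nat -> R) K p :
  \sum_(m < K + p) (m`!%:R)^-1 * ('C(m, p)%:R * g m)
    = (p`!%:R)^-1 * \sum_(k < K) (k`!%:R)^-1 * g (k + p)%N.
Proof.
rewrite addnC big_split_ord /= big1 ?add0r => [|i _]; last first.
  by rewrite bin_small // mul0r mulr0.
rewrite mulr_sumr; apply: eq_bigr => k _.
by rewrite addnC [LHS]mulrA inv_fact_bin mulrA.
Qed.

Lemma binS_as_sum {R : pzSemiRingType} m p :
  \sum_(j < p.+1) (if (j <= 1)%N then 1 else 0) * 'C(m, p - j)%:R = 'C(m.+1, p)%:R :> R.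
Proof.
case: p => [|p]; first by rewrite big_ord_recl big_ord0 /= !bin0 addr0 mul1r.
rewrite 2!big_ord_recl big1 ?addr0 => [|k _]; last by rewrite !lift0 /= mul0r.
by rewrite /= subn0 subn1 /= binS natrD !mul1r addrC.
Qed.

Lemma fps_powS f m : fps_pow f m.+1 = fps_mul f (fps_pow f m).
Proof. by []. Qed.

Lemma fps_pow_coef_lt f m n : f 0%N = 0 -> (n < m)%N -> fps_pow f m n = 0.
Proof.
move=> f0; elim: m n => [//|m IHm] n lt_nm.
rewrite fps_powS /fps_mul big1 // => -[[|i] lt_in] _ /=; first by rewrite f0 mul0r.
by rewrite IHm ?mulr0 //; lia.
Qed.

Lemma expm1_pow_coef_lt m n : (n < m)%N -> fps_pow expm1 m n = 0.
Proof. exact: fps_pow_coef_lt. Qed.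

Definition fps2_of_z (f : fps) : fps2 := fun n p => if p == 0%N then f n else 0.

Lemma expm1_zE : expm1_z = fps2_of_z expm1.
Proof. by []. Qed.

Lemma fps2_powS f m : fps2_pow f m.+1 = fps2_mul f (fps2_pow f m).
Proof. by []. Qed.

Lemma mul_y_plus_1_of_z f n p :
  fps2_mul y_plus_1 (fps2_of_z f) n p = if (p <= 1)%N then f n else 0.
Proof.
rewrite /fps2_mul big_ord_recl [X in _ + X]big1 ?addr0 => [|i _]; last first.
  by apply: big1 => j _; rewrite /y_plus_1 lift0 /= mul0r.
rewrite big_ord_recr /= big1 ?add0r => [|[j lt_jp] _]; last first.
  by rewrite /fps2_of_z subn_eq0 leqNgt lt_jp mulr0.
by rewrite /y_plus_1 /fps2_of_z subnn subn0 /=; case: ifP; rewrite ?mul1r ?mul0r.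
Qed.

Lemma pow_y_plus_1_of_z f m n p :
  fps2_pow (fps2_mul y_plus_1 (fps2_of_z f)) m n p = 'C(m, p)%:R * fps_pow f m n.
Proof.
elim: m n p => [|m IHm] n p.
  by rewrite /= /fps2_one /fps_one; case: n; case: p => *; rewrite ?mulr0 ?mul0r ?mul1r.
rewrite fps2_powS fps_powS {1}/fps2_mul /fps_mul mulr_sumr; apply: eq_bigr => i _.
under eq_bigr => j _ do rewrite IHm mul_y_plus_1_of_z.
rewrite -binS_as_sum mulr_suml; apply: eq_bigr => j _.
by case: ifP => _; rewrite ?mul0r ?mul1r // mulrCA mulrA.
Qed.

Lemma polyBell_coef {B} p n : is_polyBell B ->
  B p n / n`!%:R = \sum_(k < n.+1 - p) (k`!%:R)^-1 * fps_pow expm1 (k + p) n.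
Proof.
move=> /(_ p n) [N sumN]; rewrite -(sumN (maxn N (n.+1 - p))) ?leq_maxl //.
rewrite /fps_scale (big_ord_vanishing_tail
  (fun k => (k`!%:R)^-1 * fps_pow expm1 (k + p) n) (leq_maxr N _)) // => k le_k.
by rewrite expm1_pow_coef_lt ?mulr0 //; lia.
Qed.

Theorem mainTheorem12 (B : nat -> nat -> rat) :
  is_polyBell B ->
  fps2_exp_is (fps2_mul y_plus_1 expm1_z)
    (fun n p => if (p <= n)%N then B p n / n`!%:R / p`!%:R else 0).
Proof.
move=> isB n p; exists (n.+1 - p + p)%N => M le_M.
under eq_bigr => m _ do rewrite /fps2_scale expm1_zE pow_y_plus_1_of_z.
rewrite (big_ord_vanishing_tail
  (fun m => (m`!%:R)^-1 * ('C(m, p)%:R * fps_pow expm1 m n)) le_M); last first.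
  by move=> m le_m; rewrite expm1_pow_coef_lt ?mulr0 //; lia.
rewrite (sum_inv_fact_bin_shift (fun m => fps_pow expm1 m n)).
case: leqP => [_ | lt_np].
  by rewrite (polyBell_coef p n isB) mulrC.
by move: lt_np; rewrite -subn_eq0 => /eqP ->; rewrite big_ord0 mulr0.
Qed.
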